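(* Let $f:\mathbb{Z}^n\to\mathbb{R}\cup\{+\infty\}$ be a function satisfying condition (SSQM$^\natural$) with $\arg\min f\neq\emptyset$, and let $x\in\mathrm{dom}\,f$. (i) Let $i\in N$ and suppose that the minimum of $f(x-\chi_i+\chi_{j'})$ over $j'\in N\cup\{0\}$ is attained by some $j\in N$ (i.e., $j\neq 0$). Then there exists a minimizer $x^*$ of $f$ satisfying $x^*(j)\ge x(j)+1$ if $j\in N\setminus\{i\}$, and $x^*(i)\ge x(i)$ if $j=i$. (ii) Let $j\in N$ and suppose that the minimum of $f(x-\chi_{i'}+\chi_j)$ over $i'\in N\cup\{0\}$ is attained by some $i\in N$ (i.e., $i\neq 0$). Then there exists a minimizer $x^*$ of $f$ satisfying $x^*(i)\le x(i)-1$ if $i\in N\setminus\{j\}$, and $x^*(j)\le x(j)$ if $i=j$. (iii) Suppose that the minimum of $f(x+\chi_{j'})$ over $j'\in N\cup\{0\}$ is attained by some $j\in N$ (i.e., $j\ne 0$). Then there exists a minimizer $x^*$ of $f$ satisfying $x^*(j)\ge x(j)+1$. (iv) Suppose that the minimum of $f(x-\chi_{i'})$ over $i'\in N\cup\{0\}$ is attained by some $i\in N$ (i.e., $i\neq 0$). Then there exists a minimizer $x^*$ of $f$ satisfying $x^*(i)\le x(i)-1$.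
   Context: $N=\{1,\dots,n\}$. For $i\in N$, $\chi_i\in\{0,1\}^n$ is the characteristic vector of $i$, and $\chi_0=0$. $\mathrm{dom}\,f=\{x\in\mathbb{Z}^n\mid f(x)<+\infty\}$. For $x,y\in\mathbb{Z}^n$, $\mathrm{supp}^+(x-y)=\{i\in N\mid x(i)>y(i)\}$ and $\mathrm{supp}^-(x-y)=\{j\in N\mid x(j)<y(j)\}$. Condition (SSQM$^\natural$): for all $x,y\in\mathrm{dom}\,f$ and all $i\in\mathrm{supp}^+(x-y)$ there exists $j\in\mathrm{supp}^-(x-y)\cup\{0\}$ such that at least one of the following holds: (a) $f(x-\chi_i+\chi_j)<f(x)$; (b) $f(y+\chi_i-\chi_j)<f(y)$; (c) $f(x-\chi_i+\chi_j)=f(x)$ and $f(y+\chi_i-\chi_j)=f(y)$. *)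

From mathcomp Require Import all_boot all_order all_algebra.
From mathcomp Require Import constructive_ereal.
Set Implicit Arguments. Unset Strict Implicit. Unset Printing Implicit Defensive.
Import Order.TTheory GRing.Theory Num.Theory.
Local Open Scope ring_scope.

(* integer vectors in Z^n, indexed by N = 'I_n (i.e. {0,...,n-1}) *)
Definition vec (n : nat) := 'I_n -> int.

(* N ∪ {0} is represented by option 'I_n : Some i = i ∈ N, None = 0.
   chi (Some i) = characteristic vector of i, chi None = 0 vector. *)
Definition chi (n : nat) (o : option 'I_n) : vec n :=
  fun k => if o is Some i then ((k == i) : nat)%:Z else 0.

Definition shift (n : nat) (x : vec n) (a b : option 'I_n) : vec n :=
  fun k => x k - chi a k + chi b k.

Local Open Scope ereal_scope.

Definition in_dom (R : realDomainType) (n : nat) (f : vec n -> \bar R) (x : vec n) : Prop :=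
  f x < +oo.

Definition in_suppm0 (n : nat) (x y : vec n) (j : option 'I_n) : bool :=
  if j is Some j' then (x j' < y j')%R else true.

Definition SSQMnat (R : realDomainType) (n : nat) (f : vec n -> \bar R) : Prop :=
  forall x y : vec n, in_dom f x -> in_dom f y ->
  forall i : 'I_n, (y i < x i)%R ->
  exists j : option 'I_n, in_suppm0 x y j /\
    (f (shift x (Some i) j) < f x
     \/ f (shift y j (Some i)) < f y
     \/ (f (shift x (Some i) j) = f x /\ f (shift y j (Some i)) = f y)).

Definition is_minimizer (R : realDomainType) (n : nat) (f : vec n -> \bar R) (x : vec n) : Prop :=
  forall y : vec n, f x <= f y.

From mathcomp Require Import all_boot all_order all_algebra.
From mathcomp Require Import constructive_ereal.
From Stdlib Require Import FunctionalExtensionality.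
From mathcomp Require Import zify.
Set Implicit Arguments. Unset Strict Implicit. Unset Printing Implicit Defensive.
Import Order.TTheory GRing.Theory Num.Theory.
Local Open Scope ring_scope.
Local Open Scope ereal_scope.

(* Put y := x - chi_i + chi_j, so that f y <= f (y - chi_j + chi_k) for every
   k.  Among the minimizers z with z(j) < y(j), apply (SSQM^nat) to (y, z, j):
   it yields k in supp^-(y - z) ∪ {0}, in particular k <> j.  Alternative (a)
   contradicts the local minimality of y and (b) the minimality of z, so (c)
   holds and z + chi_j - chi_k is again a minimizer, closer to y in coordinate
   j.  Iterating gives a minimizer z with z(j) >= y(j).  Parts (ii), (iv) are
   the mirror argument. *)

Section Shift.

Variable n : nat.
Implicit Types (x : vec n) (a b c : option 'I_n).

Lemma chi_id (j : 'I_n) : chi (Some j) j = 1%R.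
Proof. by rewrite /chi eqxx. Qed.

Lemma chi_neq a (j : 'I_n) : a != Some j -> chi a j = 0%R.
Proof. by case: a => [k|] // nkj; rewrite /chi; case: eqP => // ejk; rewrite ejk eqxx in nkj. Qed.

Lemma shiftxx x a : shift x a a = x.
Proof. by apply: functional_extensionality => k; rewrite /shift subrK. Qed.

Lemma shift_shiftl x a b c : shift (shift x a b) b c = shift x a c.
Proof. by apply: functional_extensionality => k; rewrite /shift addrK. Qed.

Lemma shift_shiftr x a b c : shift (shift x a b) c a = shift x c b.
Proof. by apply: functional_extensionality => k; rewrite /shift; lia. Qed.

Lemma in_suppm0_neq x y a (j : 'I_n) :
  in_suppm0 x y a -> (y j <= x j)%R -> a != Some j.
Proof.
by case: a => [k|] //= ltxy lejxy; apply/eqP => -[ekj]; rewrite ekj ltNge lejxy in ltxy.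
Qed.

End Shift.

Section Descent.

Variables (R : realDomainType) (n : nat) (f : vec n -> \bar R).
Hypotheses (f_ssqm : SSQMnat f) (f_min : exists z : vec n, is_minimizer f z).

Lemma minimizer_in_dom (y z : vec n) :
  is_minimizer f z -> in_dom f y -> in_dom f z.
Proof. by move=> zmin; apply: le_lt_trans. Qed.

Lemma minimizer_ge_of_local_min (y : vec n) (j : 'I_n) :
  in_dom f y -> (forall k, f y <= f (shift y (Some j) k)) ->
  exists z, is_minimizer f z /\ (y j <= z j)%R.
Proof.
move=> ydom ymin; have [z0 z0min] := f_min.
have [m] := ubnP `|y j - z0 j|%N; elim: m z0 z0min => // m IHm z zmin gap.
have [le_yz | lt_zy] := lerP (y j) (z j); first by exists z.
have [k [kz alt]] := f_ssqm ydom (minimizer_in_dom zmin ydom) lt_zy.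
have kj : k != Some j by apply: in_suppm0_neq kz (ltW lt_zy).
case: alt => [lt_y | [lt_z | [_ eq_z]]].
- by have := ymin k; rewrite leNgt lt_y.
- by have := zmin (shift z k (Some j)); rewrite leNgt lt_z.
- apply: (IHm (shift z k (Some j))); first by move=> w; rewrite eq_z.
  by move: gap; rewrite /shift chi_id chi_neq // subr0; lia.
Qed.

Lemma minimizer_le_of_local_min (y : vec n) (i : 'I_n) :
  in_dom f y -> (forall k, f y <= f (shift y k (Some i))) ->
  exists z, is_minimizer f z /\ (z i <= y i)%R.
Proof.
move=> ydom ymin; have [z0 z0min] := f_min.
have [m] := ubnP `|z0 i - y i|%N; elim: m z0 z0min => // m IHm z zmin gap.
have [le_zy | lt_yz] := lerP (z i) (y i); first by exists z.
have [k [kz alt]] := f_ssqm (minimizer_in_dom zmin ydom) ydom lt_yz.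
have ki : k != Some i by apply: in_suppm0_neq kz (ltW lt_yz).
case: alt => [lt_z | [lt_y | [eq_z _]]].
- by have := zmin (shift z (Some i) k); rewrite leNgt lt_z.
- by have := ymin k; rewrite leNgt lt_y.
- apply: (IHm (shift z (Some i) k)); first by move=> w; rewrite eq_z.
  by move: gap; rewrite /shift chi_id chi_neq // addr0; lia.
Qed.

Lemma minimizer_ge_of_argmin_in (x : vec n) a (j : 'I_n) :
  in_dom f x -> (forall b, f (shift x a (Some j)) <= f (shift x a b)) ->
  exists z, is_minimizer f z /\ (shift x a (Some j) j <= z j)%R.
Proof.
move=> xdom argmin; apply: minimizer_ge_of_local_min => [|k].
  by apply: le_lt_trans (argmin a) _; rewrite shiftxx.
by rewrite shift_shiftl.
Qed.

Lemma minimizer_le_of_argmin_out (x : vec n) b (i : 'I_n) :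
  in_dom f x -> (forall a, f (shift x (Some i) b) <= f (shift x a b)) ->
  exists z, is_minimizer f z /\ (z i <= shift x (Some i) b i)%R.
Proof.
move=> xdom argmin; apply: minimizer_le_of_local_min => [|k].
  by apply: le_lt_trans (argmin b) _; rewrite shiftxx.
by rewrite shift_shiftr.
Qed.

End Descent.

Theorem theorem3p1 (R : realDomainType) (n : nat) (f : vec n -> \bar R)
  (f_noninf : forall z : vec n, f z != -oo)
  (hf : SSQMnat f)
  (hmin : exists z : vec n, is_minimizer f z)
  (x : vec n) (hx : in_dom f x) :
  (* (i) *)
  (forall (i j : 'I_n),
     (forall j' : option 'I_n, f (shift x (Some i) (Some j)) <= f (shift x (Some i) j')) ->
     exists xs : vec n, is_minimizer f xs /\
       (if j != i then (x j + 1 <= xs j)%R else (x i <= xs i)%R)) /\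
  (* (ii) *)
  (forall (i j : 'I_n),
     (forall i' : option 'I_n, f (shift x (Some i) (Some j)) <= f (shift x i' (Some j))) ->
     exists xs : vec n, is_minimizer f xs /\
       (if i != j then (xs i <= x i - 1)%R else (xs j <= x j)%R)) /\
  (* (iii) *)
  (forall j : 'I_n,
     (forall j' : option 'I_n, f (shift x None (Some j)) <= f (shift x None j')) ->
     exists xs : vec n, is_minimizer f xs /\ (x j + 1 <= xs j)%R) /\
  (* (iv) *)
  (forall i : 'I_n,
     (forall i' : option 'I_n, f (shift x (Some i) None) <= f (shift x i' None)) ->
     exists xs : vec n, is_minimizer f xs /\ (xs i <= x i - 1)%R).
Proof.
split; [|split; [|split]].
- move=> i j /(minimizer_ge_of_argmin_in hf hmin hx) [xs [xsmin le_xs]].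
  exists xs; split => //; move: le_xs; rewrite /shift /chi.
  by case: (j =P i) => [->|]; rewrite ?eqxx /=; lia.
- move=> i j /(minimizer_le_of_argmin_out hf hmin hx) [xs [xsmin le_xs]].
  exists xs; split => //; move: le_xs; rewrite /shift /chi.
  by case: (i =P j) => [->|]; rewrite ?eqxx /=; lia.
- move=> j /(minimizer_ge_of_argmin_in hf hmin hx) [xs [xsmin le_xs]].
  by exists xs; split => //; move: le_xs; rewrite /shift chi_id /chi; lia.
- move=> i /(minimizer_le_of_argmin_out hf hmin hx) [xs [xsmin le_xs]].
  by exists xs; split => //; move: le_xs; rewrite /shift chi_id /chi; lia.
Qed.
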